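(* Let $Q$ be a right Leibniz algebra which is a weak algebra of quotients of its subalgebra $L$. (1) If $I$ is a nonzero ideal of $Q$, then $I\cap L$ is a nonzero ideal of $L$. (2) If $L$ is semiprime (respectively prime), then so is $Q$.
   Context: A right Leibniz algebra satisfies $[x,[y,z]]=[[x,y],z]-[[x,z],y]$. Ideals: subspaces $I$ with $[I,A]\subseteq I$, $[A,I]\subseteq I$ in the ambient algebra $A$. A Leibniz algebra is semiprime if $[I,I]\ne\{0\}$ for every nonzero ideal $I$, and prime if $[I,J]\neq\{0\}$ for all nonzero ideals $I,J$. $Q$ is a weak algebra of quotients of $L$ if for every $0\ne q\in Q$ there exists $x\in L$ with $0\ne[q,x]\in L$ or $y\in L$ with $0\ne[y,q]\in L$. *)

From HB Require Import structures.
From mathcomp Require Import all_boot all_order all_algebra.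
Set Implicit Arguments. Unset Strict Implicit. Unset Printing Implicit Defensive.
Import GRing.Theory.
Local Open Scope ring_scope.

Section Leibniz.
Variables (R : fieldType) (V : lmodType R) (br : V -> V -> V).

Definition right_leibniz : Prop :=
  (forall (a : R) (x y z : V), br (a *: x + y) z = a *: br x z + br y z) /\
  (forall (a : R) (x y z : V), br z (a *: x + y) = a *: br z x + br z y) /\
  (forall x y z : V, br x (br y z) = br (br x y) z - br (br x z) y).

Definition subspace (S : V -> Prop) : Prop :=
  S 0 /\ (forall x y, S x -> S y -> S (x + y)) /\ (forall (a : R) x, S x -> S (a *: x)).

Definition subalgebra (L : V -> Prop) : Prop :=
  subspace L /\ (forall x y, L x -> L y -> L (br x y)).

(* I is an ideal of the subalgebra A (A = fun _ => True gives ideals of V) *)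
Definition ideal_of (A I : V -> Prop) : Prop :=
  subspace I /\ (forall x, I x -> A x) /\
  (forall x a, I x -> A a -> I (br x a) /\ I (br a x)).

Definition nonzero (I : V -> Prop) : Prop := exists x, I x /\ x <> 0.

Definition bracket_nonzero (I J : V -> Prop) : Prop :=
  exists x y, I x /\ J y /\ br x y <> 0.

Definition semiprime_on (A : V -> Prop) : Prop :=
  forall I, ideal_of A I -> nonzero I -> bracket_nonzero I I.

Definition prime_on (A : V -> Prop) : Prop :=
  forall I J, ideal_of A I -> ideal_of A J -> nonzero I -> nonzero J ->
    bracket_nonzero I J.

Definition weak_quotients (L : V -> Prop) : Prop :=
  forall q : V, q <> 0 ->
    (exists x, L x /\ br q x <> 0 /\ L (br q x)) \/
    (exists y, L y /\ br y q <> 0 /\ L (br y q)).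

End Leibniz.

(** Intersecting with L preserves ideals, and every nonzero element q of an
    ideal I of Q has a nonzero bracket with some element of L that lies in L;
    that bracket is in I as well, so I ∩ L is a nonzero ideal of L.  A nonzero
    bracket of I ∩ L with J ∩ L is a nonzero bracket of I with J, which
    transfers semiprimeness and primeness from L to Q. *)
From mathcomp Require Import all_boot all_order all_algebra.
Set Implicit Arguments. Unset Strict Implicit. Unset Printing Implicit Defensive.
Local Open Scope ring_scope.

Section WeakQuotients.
Variables (R : fieldType) (Q : lmodType R) (br : Q -> Q -> Q) (L : Q -> Prop).

Definition restrict (I : Q -> Prop) : Q -> Prop := fun x => I x /\ L x.

Lemma subspace_restrict (I : Q -> Prop) :
  subspace I -> subspace L -> subspace (restrict I).
Proof.
move=> [I0 [ID IZ]] [L0 [LD LZ]]; split; first by split.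
split=> [x y [Ix Lx] [Iy Ly] | a x [Ix Lx]]; split; auto.
Qed.

Lemma ideal_restrict (I : Q -> Prop) :
  subalgebra br L -> ideal_of br (fun _ => True) I -> ideal_of br L (restrict I).
Proof.
move=> [sL brL] [sI [_ brI]]; split; first exact: subspace_restrict.
split=> [x [] // | x a [Ix Lx] La].
have [Ixa Iax] := brI x a Ix Logic.I.
by split; split; auto.
Qed.

Lemma nonzero_restrict (I : Q -> Prop) :
  weak_quotients br L -> ideal_of br (fun _ => True) I -> nonzero I ->
  nonzero (restrict I).
Proof.
move=> wqL [_ [_ brI]] [q [Iq q_neq0]].
case: (wqL q q_neq0) => [[x [Lx [qx_neq0 Lqx]]] | [y [Ly [yq_neq0 Lyq]]]].
- by exists (br q x); split=> //; split=> //; exact: (brI q x Iq Logic.I).1.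
- by exists (br y q); split=> //; split=> //; exact: (brI q y Iq Logic.I).2.
Qed.

Lemma bracket_nonzero_restrict (I J : Q -> Prop) :
  bracket_nonzero br (restrict I) (restrict J) -> bracket_nonzero br I J.
Proof. by move=> [x [y [[Ix _] [[Jy _] xy_neq0]]]]; exists x, y. Qed.

Hypotheses (subL : subalgebra br L) (wqL : weak_quotients br L).

Lemma semiprime_of_weak_quotients :
  semiprime_on br L -> semiprime_on br (fun _ => True).
Proof.
move=> spL I idI nzI; apply: bracket_nonzero_restrict.
by apply: spL; [exact: ideal_restrict | exact: nonzero_restrict].
Qed.

Lemma prime_of_weak_quotients :
  prime_on br L -> prime_on br (fun _ => True).
Proof.
move=> pL I J idI idJ nzI nzJ; apply: bracket_nonzero_restrict.
by apply: pL; (exact: ideal_restrict || exact: nonzero_restrict).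
Qed.

End WeakQuotients.

Theorem proposition3p6 (R : fieldType) (Q : lmodType R) (br : Q -> Q -> Q)
    (L : Q -> Prop) :
  right_leibniz br -> subalgebra br L -> weak_quotients br L ->
  (forall I : Q -> Prop, ideal_of br (fun _ => True) I -> nonzero I ->
     ideal_of br L (fun x => I x /\ L x) /\ nonzero (fun x => I x /\ L x)) /\
  (semiprime_on br L -> semiprime_on br (fun _ => True)) /\
  (prime_on br L -> prime_on br (fun _ => True)).
Proof.
move=> _ subL wqL; split.
  move=> I idI nzI; split; first exact: ideal_restrict.
  exact: nonzero_restrict wqL idI nzI.
split; [exact: semiprime_of_weak_quotients | exact: prime_of_weak_quotients].
Qed.
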